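(* Let $\Theta$ be a well-formed System $\mathsf{F_\wedge}$ context, $S_0,T_0$ types over $\Theta$, and $S_1,T_1$ types over $\Theta, X<:S_0$. If $\Theta \vdash T_0 <: S_0$ and $\Theta, X <: S_0 \vdash S_1 <: T_1$, then $\Theta \vdash \forall X.\,S_1[X\wedge S_0/X] <: \forall X.\,T_1[X\wedge T_0/X^-]$.
   Context: System $\mathsf{F_\wedge}$: raw types $T ::= \top \mid X \mid T \to T \mid \forall X.T \mid T \wedge T$, identified up to $\alpha$-conversion. Contexts are finite sequences of assumptions $X<:T$ or $x:T$ with distinct variables, each type well-formed over the preceding part. Subtyping $\Theta \vdash S <: T$ is generated by: (Var) $\Theta, X<:T,\Theta' \vdash X <: T$; (Top) $T <: \top$; (Refl); (Trans); ($\to$) from $S'<:S$ and $T<:T'$ infer $S\to T <: S' \to T'$; ($\forall$) from $\Theta, X<:\top \vdash S <: T$ infer $\Theta \vdash \forall X.S <: \forall X.T$; (meet) $S\wedge S' <: S$, $S \wedge S' <: S'$, and from $T<:S$, $T<:S'$ infer $T <: S\wedge S'$. $T[U/X]$ is ordinary capture-avoiding substitution. Mixed substitution $T[(S_-,S_+)/X]$: $X \mapsto S_+$; $Y \mapsto Y$ for $Y\not\equiv X$; $\top\mapsto\top$; $(T\to T')[(S_-,S_+)/X] = T[(S_+,S_-)/X] \to T'[(S_-,S_+)/X]$; it commutes with $\forall Y$ and $\wedge$. $T[U/X^-]$ abbreviates $T[(U,X)/X]$ (only negative occurrences of $X$ replaced by $U$). *)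

From Stdlib Require Import List.
Import ListNotations.

Inductive ty : Type :=
| TTop : ty
| TVar : nat -> ty
| TArr : ty -> ty -> ty
| TAll : ty -> ty          (* forall X. T ; X is index 0 in the body *)
| TMeet : ty -> ty -> ty.

Definition uprn (xi : nat -> nat) : nat -> nat :=
  fun n => match n with 0 => 0 | S m => S (xi m) end.

Fixpoint rename (xi : nat -> nat) (T : ty) : ty :=
  match T with
  | TTop => TTop
  | TVar n => TVar (xi n)
  | TArr A B => TArr (rename xi A) (rename xi B)
  | TAll A => TAll (rename (uprn xi) A)
  | TMeet A B => TMeet (rename xi A) (rename xi B)
  end.

Definition shift (T : ty) : ty := rename S T.

Definition up (sigma : nat -> ty) : nat -> ty :=
  fun n => match n with 0 => TVar 0 | S m => shift (sigma m) end.

Fixpoint subst (sigma : nat -> ty) (T : ty) : ty :=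
  match T with
  | TTop => TTop
  | TVar n => sigma n
  | TArr A B => TArr (subst sigma A) (subst sigma B)
  | TAll A => TAll (subst (up sigma) A)
  | TMeet A B => TMeet (subst sigma A) (subst sigma B)
  end.

(* Mixed substitution: sneg is used for variables in negative position,
   spos for variables in positive position; the arrow domain swaps them. *)
Fixpoint msubst (sneg spos : nat -> ty) (T : ty) : ty :=
  match T with
  | TTop => TTop
  | TVar n => spos n
  | TArr A B => TArr (msubst spos sneg A) (msubst sneg spos B)
  | TAll A => TAll (msubst (up sneg) (up spos) A)
  | TMeet A B => TMeet (msubst sneg spos A) (msubst sneg spos B)
  end.

(* substitution for the variable X = index 0, leaving other variables alone
   (X stays in scope: used when X is subsequently rebound by a forall) *)
Definition at0 (U : ty) : nat -> ty :=
  fun n => match n with 0 => U | S m => TVar (S m) end.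

Definition subst0 (U T : ty) : ty := subst (at0 U) T.
(* T[(Sm,Sp)/X] with X = index 0 *)
Definition msubst0 (Sm Sp T : ty) : ty := msubst (at0 Sm) (at0 Sp) T.
(* T[U/X^-] := T[(U,X)/X] *)
Definition nsubst0 (U T : ty) : ty := msubst0 U (TVar 0) T.

(* Contexts: most recent binding first. *)
Inductive entry : Type :=
| TBind : ty -> entry
| VBind : ty -> entry.

Definition ctx := list entry.

Fixpoint ntv (G : ctx) : nat :=
  match G with
  | [] => 0
  | TBind _ :: G' => S (ntv G')
  | VBind _ :: G' => ntv G'
  end.

Fixpoint wf_ty (k : nat) (T : ty) : Prop :=
  match T with
  | TTop => True
  | TVar n => n < k
  | TArr A B => wf_ty k A /\ wf_ty k B
  | TAll A => wf_ty (S k) A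
  | TMeet A B => wf_ty k A /\ wf_ty k B
  end.

Inductive wf_ctx : ctx -> Prop :=
| wf_nil : wf_ctx []
| wf_tbind : forall G T, wf_ctx G -> wf_ty (ntv G) T -> wf_ctx (TBind T :: G)
| wf_vbind : forall G T, wf_ctx G -> wf_ty (ntv G) T -> wf_ctx (VBind T :: G).

(* bound of type variable n in G, expressed over the whole of G *)
Fixpoint tlookup (G : ctx) (n : nat) : option ty :=
  match G with
  | [] => None
  | TBind T :: G' =>
      match n with
      | 0 => Some (shift T)
      | S m => option_map shift (tlookup G' m)
      end
  | VBind _ :: G' => tlookup G' n
  end.

Inductive sub : ctx -> ty -> ty -> Prop :=
| SVar : forall G n T, tlookup G n = Some T -> sub G (TVar n) T
| STop : forall G T, sub G T TTop
| SRefl : forall G T, sub G T T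
| STrans : forall G S U T, sub G S U -> sub G U T -> sub G S T
| SArr : forall G S S' T T', sub G S' S -> sub G T T' -> sub G (TArr S T) (TArr S' T')
| SAll : forall G S T, sub (TBind TTop :: G) S T -> sub G (TAll S) (TAll T)
| SMeetL : forall G S S', sub G (TMeet S S') S
| SMeetR : forall G S S', sub G (TMeet S S') S'
| SMeetI : forall G T S S', sub G T S -> sub G T S' -> sub G T (TMeet S S').

(* Substituting X |-> X /\ S0 in a derivation of S1 <: T1 under X <: S0 gives a
   derivation under X <: Top, because the bound assumption X <: S0 is replaced by
   the provable X /\ S0 <: S0.  It then remains to compare T1[X /\ S0 / X] with
   T1[X /\ T0 / X^-]: mixed substitution is monotone, covariantly in the positive
   and contravariantly in the negative substituend, and X /\ T0 <: X /\ S0 and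
   X /\ S0 <: X. *)

From Stdlib Require Import List.
Import ListNotations.

Lemma rename_ext T f g : (forall n, f n = g n) -> rename f T = rename g T.
Proof.
  revert f g; induction T; intros f g H; simpl; f_equal; auto.
  apply IHT; intros [|n]; simpl; auto.
Qed.

Lemma rename_rename T f g : rename f (rename g T) = rename (fun n => f (g n)) T.
Proof.
  revert f g; induction T; intros f g; simpl; f_equal; auto.
  rewrite IHT; apply rename_ext; intros [|n]; reflexivity.
Qed.

Lemma subst_ext T f g : (forall n, f n = g n) -> subst f T = subst g T.
Proof.
  revert f g; induction T; intros f g H; simpl; f_equal; auto.
  apply IHT; intros [|n]; simpl; rewrite ?H; reflexivity.
Qed.

Lemma subst_rename T s xi : subst s (rename xi T) = subst (fun n => s (xi n)) T.
Proof.
  revert s xi; induction T; intros s xi; simpl; f_equal; auto.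
  rewrite IHT; apply subst_ext; intros [|n]; reflexivity.
Qed.

Lemma rename_subst T s xi :
  rename xi (subst s T) = subst (fun n => rename xi (s n)) T.
Proof.
  revert s xi; induction T; intros s xi; simpl; f_equal; auto.
  rewrite IHT; apply subst_ext; intros [|n]; simpl; auto.
  unfold shift; rewrite !rename_rename; apply rename_ext; reflexivity.
Qed.

Lemma rename_as_subst T xi : rename xi T = subst (fun n => TVar (xi n)) T.
Proof.
  revert xi; induction T; intros xi; simpl; f_equal; auto.
  rewrite IHT; apply subst_ext; intros [|n]; reflexivity.
Qed.

Lemma subst_up_shift T s : subst (up s) (shift T) = shift (subst s T).
Proof.
  unfold shift at 1; rewrite subst_rename; unfold shift; rewrite rename_subst.
  apply subst_ext; reflexivity.
Qed.

Lemma subst_at0_shift U T : subst (at0 U) (shift T) = shift T.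
Proof.
  unfold shift; rewrite subst_rename, rename_as_subst; apply subst_ext; reflexivity.
Qed.

Lemma msubst_diag T s : msubst s s T = subst s T.
Proof.
  revert s; induction T; intros s; simpl; f_equal; auto.
Qed.

Lemma sub_rename G A B : sub G A B -> forall D xi,
  (forall n T, tlookup G n = Some T -> tlookup D (xi n) = Some (rename xi T)) ->
  sub D (rename xi A) (rename xi B).
Proof.
  induction 1; intros D xi Hlookup; simpl.
  - apply SVar; auto.
  - apply STop.
  - apply SRefl.
  - eapply STrans; eauto.
  - apply SArr; auto.
  - apply SAll, IHsub; intros [|m] U HU; simpl in *.
    + injection HU as <-; reflexivity.
    + destruct (tlookup G m) as [U'|] eqn:E; simpl in HU; [|discriminate].
      injection HU as <-; rewrite (Hlookup _ _ E); simpl; f_equal.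
      unfold shift; rewrite !rename_rename; apply rename_ext; reflexivity.
  - apply SMeetL.
  - apply SMeetR.
  - apply SMeetI; auto.
Qed.

Lemma sub_weaken G A B : sub G A B -> sub (TBind TTop :: G) (shift A) (shift B).
Proof.
  intros HAB; eapply sub_rename; [exact HAB|].
  intros n T HT; simpl; rewrite HT; reflexivity.
Qed.

Lemma sub_subst G A B : sub G A B -> forall D s,
  (forall n T, tlookup G n = Some T -> sub D (s n) (subst s T)) ->
  sub D (subst s A) (subst s B).
Proof.
  induction 1; intros D s Hbound; simpl.
  - auto.
  - apply STop.
  - apply SRefl.
  - eapply STrans; eauto.
  - apply SArr; auto.
  - apply SAll, IHsub; intros [|m] U HU; simpl in *.
    + injection HU as <-; apply STop.
    + destruct (tlookup G m) as [U'|] eqn:E; simpl in HU; [|discriminate].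
      injection HU as <-; rewrite subst_up_shift; apply sub_weaken; auto.
  - apply SMeetL.
  - apply SMeetR.
  - apply SMeetI; auto.
Qed.

Lemma sub_msubst T G n1 p1 n2 p2 :
  (forall n, sub G (n2 n) (n1 n)) -> (forall n, sub G (p1 n) (p2 n)) ->
  sub G (msubst n1 p1 T) (msubst n2 p2 T).
Proof.
  revert G n1 p1 n2 p2; induction T; intros G n1 p1 n2 p2 Hneg Hpos; simpl.
  - apply SRefl.
  - auto.
  - apply SArr; auto.
  - apply SAll, IHT; intros [|m]; simpl; try apply SRefl; apply sub_weaken; auto.
  - apply SMeetI.
    + eapply STrans; [apply SMeetL | auto].
    + eapply STrans; [apply SMeetR | auto].
Qed.

Lemma sub_subst0_meet_bound G B B' A C :
  sub (TBind B :: G) A C ->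
  sub (TBind B' :: G) (subst0 (TMeet (TVar 0) (shift B)) A)
                      (subst0 (TMeet (TVar 0) (shift B)) C).
Proof.
  intros HAC; eapply sub_subst; [exact HAC|].
  intros [|m] T HT; simpl in HT.
  - injection HT as <-; rewrite subst_at0_shift; apply SMeetR.
  - destruct (tlookup G m) as [T'|] eqn:E; simpl in HT; [|discriminate].
    injection HT as <-; rewrite subst_at0_shift.
    apply SVar; simpl; rewrite E; reflexivity.
Qed.

Lemma sub_subst0_meet_nsubst0 D U U' T :
  sub D U' U ->
  sub D (subst0 (TMeet (TVar 0) U) T) (nsubst0 (TMeet (TVar 0) U') T).
Proof.
  intros HU; unfold subst0, nsubst0, msubst0; rewrite <- msubst_diag.
  apply sub_msubst; intros [|m]; simpl; try apply SRefl.
  - apply SMeetI; [apply SMeetL|]; eapply STrans; [apply SMeetR | exact HU].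
  - apply SMeetL.
Qed.

Theorem lemma3p8 (G : ctx) (S0 T0 S1 T1 : ty) :
  wf_ctx G ->
  wf_ty (ntv G) S0 -> wf_ty (ntv G) T0 ->
  wf_ty (S (ntv G)) S1 -> wf_ty (S (ntv G)) T1 ->
  sub G T0 S0 ->
  sub (cons (TBind S0) G) S1 T1 ->
  sub G (TAll (subst0 (TMeet (TVar 0) (shift S0)) S1))
        (TAll (nsubst0 (TMeet (TVar 0) (shift T0)) T1)).
Proof.
  intros _ _ _ _ _ HT0S0 HS1T1.
  apply SAll, STrans with (subst0 (TMeet (TVar 0) (shift S0)) T1).
  - exact (sub_subst0_meet_bound _ _ _ _ _ HS1T1).
  - apply sub_subst0_meet_nsubst0, sub_weaken, HT0S0.
Qed.
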